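(* Let $\mathcal A=\mathbb N_+=\{1,2,\dots\}$, $\Omega=\mathcal A^{\mathbb N}$, and $\mathbb P$ the product measure with $\mathbb P[a_0,\dots,a_{n-1}]=\prod_{j<n}2^{-a_j}$. Let $\Omega_0=\{0,1\}^{\mathbb N}$ with σ-algebra $\mathcal F_0$ generated by cylinders and left shift $T_0$. Define $\theta(a_1,a_2)=1$ if $a_2=a_1+1$ and $0$ otherwise, $\Theta:\Omega\to\Omega_0$ by $(\Theta\omega)_j=\theta(\omega_j,\omega_{j+1})$, and $\mathbb P_0=\mathbb P\circ\Theta^{-1}$. Then (a) $\mathbb P_0$ is $T_0$-invariant; (b) $\mathbb P_0$ is ψ-mixing; (c) for $\omega\in\Omega_0$ with $\omega_j=1$ for all $j\ge0$, $\lim_{n\to\infty}\mathbb P_0(A^\omega_{n+1}\mid A^\omega_n)=0$.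
   Context: Cylinders in $\Omega_0$: $[b_0,\dots,b_{n-1}]_0=\{\omega\in\Omega_0:\omega_j=b_j,0\le j<n\}$, $A_n^\omega=[\omega_0,\dots,\omega_{n-1}]_0$. A probability $Q$ on $(\Omega_0,\mathcal F_0)$ is ψ-mixing if there is $\psi_m\ge0$, $\psi_m\to0$, with $|Q(E\cap T_0^{-(n+m)}F)-Q(E)Q(F)|\le\psi_mQ(E)Q(F)$ for all $m,n\in\mathbb N$, $E$ in the σ-algebra generated by coordinates $0,\dots,n-1$, and $F\in\mathcal F_0$. *)

From Stdlib Require Import Reals Lra List Classical ClassicalEpsilon.
Open Scope R_scope.

Inductive sigma_gen {X : Type} (G : (X -> Prop) -> Prop) : (X -> Prop) -> Prop :=
| sg_base : forall A, G A -> sigma_gen G A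
| sg_compl : forall A, sigma_gen G A -> sigma_gen G (fun x => ~ A x)
| sg_union : forall A : nat -> X -> Prop,
    (forall i, sigma_gen G (A i)) -> sigma_gen G (fun x => exists i, A i x)
| sg_ext : forall A B, (forall x, A x <-> B x) -> sigma_gen G A -> sigma_gen G B.

Definition Inf (A : R -> Prop) : R :=
  epsilon (inhabits 0) (fun r => is_lub (fun x => A (- x)) (- r)).

(* Letters are encoded as nat: the code k : nat stands for the letter a = k+1. *)
Definition Omega := nat -> nat.
Definition letter (k : nat) : nat := S k.

Definition cyl (l : list nat) : Omega -> Prop :=
  fun w => forall j, (j < length l)%nat -> w j = nth j l 0%nat.

Definition cyl_weight (l : list nat) : R :=
  fold_right (fun k acc => (/2) ^ (letter k) * acc) 1 l.

(* The product measure P, extended to all subsets of Omega as its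
   Caratheodory outer measure (it coincides with P on measurable sets). *)
Definition Pout (S : Omega -> Prop) : R :=
  Inf (fun s => exists C : nat -> list nat,
         (forall w, S w -> exists i, cyl (C i) w) /\
         infinite_sum (fun i => cyl_weight (C i)) s).

Definition Omega0 := nat -> bool.

Definition cyl0 (l : list bool) : Omega0 -> Prop :=
  fun w => forall j, (j < length l)%nat -> w j = nth j l false.

Definition F0 : (Omega0 -> Prop) -> Prop :=
  sigma_gen (fun A => exists l, A = cyl0 l).

Definition Fcoord (n : nat) : (Omega0 -> Prop) -> Prop :=
  sigma_gen (fun A => exists j b, (j < n)%nat /\ A = (fun w : Omega0 => w j = b)).

Definition T0 (w : Omega0) : Omega0 := fun j => w (S j).
Definition T0iter (k : nat) (w : Omega0) : Omega0 := fun j => w (j + k)%nat.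
Definition preim {X Y : Type} (f : X -> Y) (F : Y -> Prop) : X -> Prop :=
  fun x => F (f x).
Definition inter {X : Type} (A B : X -> Prop) : X -> Prop := fun x => A x /\ B x.

Definition Acyl (w : Omega0) (n : nat) : Omega0 -> Prop :=
  fun v => forall j, (j < n)%nat -> v j = w j.

(* theta(a1,a2) = 1 iff a2 = a1 + 1 (invariant under the letter coding) *)
Definition theta (a1 a2 : nat) : bool := Nat.eqb a2 (S a1).
Definition Theta (w : Omega) : Omega0 := fun j => theta (w j) (w (S j)).

Definition P0 (F : Omega0 -> Prop) : R := Pout (preim Theta F).

Definition psi_mixing (Q : (Omega0 -> Prop) -> R) : Prop :=
  exists psi : nat -> R,
    (forall m, 0 <= psi m) /\ Un_cv psi 0 /\
    forall (m n : nat) (E F : Omega0 -> Prop),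
      Fcoord n E -> F0 F ->
      Rabs (Q (inter E (preim (T0iter (n + m)) F)) - Q E * Q F)
        <= psi m * Q E * Q F.

(* Everything rests on conditioning on the first letter: for every set [Z] of sequences,
   [Pout Z = sum_a 2^-(a+1) * Pout (section a Z)]. As this holds for arbitrary sets, the outer
   measure never needs measurability. Its lower bound uses that a countable family of cylinders
   of total weight [s < 1] cannot cover the whole space: choosing the letters one at a time so
   that the conditional weight of the family stays below [1] produces a point it misses.

   (a) Every section of [Theta^-1 (T0^-1 F)] is [Theta^-1 F].
   (b) An event [E] on the first [n] bits of [Theta om] only depends on [om_0 .. om_n], and
   [T0^-(n+m) F] only on [om_(n+m), ...]. For [m >= 1] they are independent; for [m = 0]
   they share the letter [om_n], and conditioning on it multiplies the probability of [F] by
   at most [4]. This last bound compares, through expansions along runs [k, k+1, k+2, ...],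
   the conditional probability given [om_0 = k] with those given [om_0 = 0] and [om_0 = 1].
   (c) After [n] bits equal to one, the letters form a run [a, a+1, ..., a+n], and the next bit
   is one only if the next letter is [a+n+1], which has probability at most [2^-(n+2)]. *)

From Stdlib Require Import Reals Lra Lia List Classical ClassicalEpsilon FunctionalExtensionality.
Open Scope R_scope.
Import ListNotations.

(** * Finite sums and series *)

(* [psum f n = f 0 + ... + f (n-1)]; unlike [sum_f_R0], the bound is exclusive. *)
Fixpoint psum (f : nat -> R) (n : nat) : R :=
  match n with O => 0 | S n => psum f n + f n end.

Definition has_sum (f : nat -> R) (s : R) : Prop := Un_cv (psum f) s.

Lemma psum_ext f g n : (forall i, f i = g i) -> psum f n = psum g n.
Proof. intros H; induction n; simpl; [lra | rewrite IHn, H; lra]. Qed.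

Lemma psum_le f g n : (forall i, (i < n)%nat -> f i <= g i) -> psum f n <= psum g n.
Proof.
  intros H; induction n; simpl; [lra |].
  assert (f n <= g n) by (apply H; lia).
  assert (psum f n <= psum g n) by (apply IHn; intros; apply H; lia).
  lra.
Qed.

Lemma psum_nonneg f n : (forall i, 0 <= f i) -> 0 <= psum f n.
Proof. intros H; induction n; simpl; [lra | specialize (H n); lra]. Qed.

Lemma psum_mono f n m : (forall i, 0 <= f i) -> (n <= m)%nat -> psum f n <= psum f m.
Proof. intros H Hnm; induction Hnm; simpl; [lra | specialize (H m); lra]. Qed.

Lemma psum_plus f g n : psum (fun i => f i + g i) n = psum f n + psum g n.
Proof. induction n; simpl; lra. Qed.

Lemma psum_scal c f n : psum (fun i => c * f i) n = c * psum f n.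
Proof. induction n; simpl; [lra | rewrite IHn; ring]. Qed.

Lemma psum_zero n : psum (fun _ => 0) n = 0.
Proof. induction n; simpl; lra. Qed.

Lemma psum_shift f n : psum f (S n) = f O + psum (fun i => f (S i)) n.
Proof. induction n; simpl in *; [lra | rewrite IHn; lra]. Qed.

Lemma psum_add f a b : psum f (a + b) = psum f a + psum (fun i => f (a + i)%nat) b.
Proof.
  induction b; simpl.
  - rewrite Nat.add_0_r; lra.
  - rewrite Nat.add_succ_r; simpl; rewrite IHb; lra.
Qed.

Lemma psum_swap (h : nat -> nat -> R) n m :
  psum (fun i => psum (h i) m) n = psum (fun j => psum (fun i => h i j) n) m.
Proof.
  induction n; simpl.
  - symmetry; apply psum_zero.
  - rewrite IHn, <- psum_plus. reflexivity.
Qed.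

Lemma psum_blocks f n K :
  psum f (n * K) = psum (fun q => psum (fun r => f (q * K + r)%nat) K) n.
Proof.
  induction n; simpl; [reflexivity |].
  replace (K + n * K)%nat with (n * K + K)%nat by lia. rewrite psum_add, IHn. reflexivity.
Qed.

Lemma psum_update f g k n : (forall x, x <> k -> g x = f x) ->
  psum g n = psum f n + (if Nat.ltb k n then g k - f k else 0).
Proof.
  intros H; induction n; simpl; [lra |].
  rewrite IHn. destruct (Nat.eq_dec n k) as [-> | Hne].
  - destruct (Nat.ltb_spec k k); destruct (Nat.ltb_spec k (S k)); try lia. lra.
  - rewrite (H n Hne).
    destruct (Nat.ltb_spec k n); destruct (Nat.ltb_spec k (S n)); try lra; lia.
Qed.

Lemma psum_indicator b c M : 0 <= c -> psum (fun a => if Nat.eqb b a then c else 0) M <= c.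
Proof.
  intros Hc.
  assert (Hlow : forall k, (k <= b)%nat -> psum (fun a => if Nat.eqb b a then c else 0) k = 0).
  { induction k; intros Hk; simpl; [lra |].
    rewrite IHk by lia. destruct (Nat.eqb_spec b k); [lia | lra]. }
  induction M; simpl; [lra |].
  destruct (Nat.eqb_spec b M) as [<- | _]; [rewrite Hlow by lia |]; lra.
Qed.

Lemma Un_cv_const c : Un_cv (fun _ => c) c.
Proof. intros e He; exists O; intros; unfold Rdist; rewrite Rminus_diag, Rabs_R0; lra. Qed.

Lemma has_sum_unique f s t : has_sum f s -> has_sum f t -> s = t.
Proof. apply UL_sequence. Qed.

Lemma psum_le_has_sum f s n : (forall i, 0 <= f i) -> has_sum f s -> psum f n <= s.
Proof. intros H Hs. apply growing_ineq; auto. intro m; simpl; specialize (H m); lra. Qed.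

Lemma has_sum_nonneg f s : (forall i, 0 <= f i) -> has_sum f s -> 0 <= s.
Proof. intros H Hs. exact (psum_le_has_sum f s O H Hs). Qed.

Lemma has_sum_bounded f b : (forall i, 0 <= f i) -> (forall n, psum f n <= b) ->
  exists s, has_sum f s /\ s <= b.
Proof.
  intros H Hb.
  assert (Hg : Un_growing (psum f)) by (intro n; simpl; specialize (H n); lra).
  destruct (growing_cv _ Hg) as [l Hl]; [exists b; intros x [n ->]; apply Hb |].
  exists l; split; [exact Hl | exact (Rle_cv_lim Hb Hl (Un_cv_const b))].
Qed.

Lemma has_sum_ext f g s : (forall i, f i = g i) -> has_sum f s -> has_sum g s.
Proof.
  intros E H e He; destruct (H e He) as [N HN]; exists N; intros n Hn.
  rewrite <- (psum_ext f g n E); auto.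
Qed.

Lemma has_sum_scal c f s : has_sum f s -> has_sum (fun i => c * f i) (c * s).
Proof.
  intros H e He; destruct (CV_mult _ _ _ _ (Un_cv_const c) H e He) as [N HN].
  exists N; intros n Hn. rewrite psum_scal; auto.
Qed.

Lemma has_sum_plus f g s t : has_sum f s -> has_sum g t -> has_sum (fun i => f i + g i) (s + t).
Proof.
  intros H1 H2 e He; destruct (CV_plus _ _ _ _ H1 H2 e He) as [N HN].
  exists N; intros n Hn. rewrite psum_plus; auto.
Qed.

Lemma has_sum_zero : has_sum (fun _ => 0) 0.
Proof.
  intros e He; exists O; intros n _.
  unfold Rdist. rewrite psum_zero, Rminus_diag, Rabs_R0; lra.
Qed.

Lemma has_sum_psum (g : nat -> nat -> R) (T : nat -> R) M :
  (forall a, has_sum (g a) (T a)) -> has_sum (fun i => psum (fun a => g a i) M) (psum T M).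
Proof.
  intros H. induction M; simpl; [apply has_sum_zero | apply has_sum_plus; auto].
Qed.

Lemma has_sum_le f g s t : has_sum f s -> has_sum g t -> (forall i, f i <= g i) -> s <= t.
Proof. intros H1 H2 Hle. refine (Rle_cv_lim _ H1 H2); intro n; apply psum_le; auto. Qed.

Lemma has_sum_update f g k s : has_sum f s -> (forall x, x <> k -> g x = f x) ->
  has_sum g (s + (g k - f k)).
Proof.
  intros Hf H e He. destruct (Hf e He) as [N HN]. exists (max N (S k)). intros n Hn.
  rewrite (psum_update f g k n H).
  destruct (Nat.ltb_spec k n); [| lia].
  unfold Rdist. replace (psum f n + (g k - f k) - (s + (g k - f k))) with (psum f n - s) by ring.
  apply HN; lia.
Qed.

Lemma has_sum_single f s k : has_sum f s -> (forall x, x <> k -> f x = 0) -> s = f k.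
Proof.
  intros Hf H. replace (f k) with (0 + (f k - 0)) by ring.
  apply (has_sum_unique f); [exact Hf | apply (has_sum_update (fun _ => 0)); auto using has_sum_zero].
Qed.

Lemma psum_term_le f i n : (forall i, 0 <= f i) -> (i < n)%nat -> f i <= psum f n.
Proof.
  intros H Hi; induction Hi; simpl.
  - pose proof (psum_nonneg f i H); lra.
  - specialize (H m); lra.
Qed.

Lemma has_sum_two_le f s i j : (forall x, 0 <= f x) -> has_sum f s -> (i < j)%nat ->
  f i + f j <= s.
Proof.
  intros H Hs Hij. pose proof (psum_term_le f i j H Hij).
  pose proof (psum_le_has_sum f s (S j) H Hs). simpl in *; lra.
Qed.

Lemma infinite_sum_has_sum f s : infinite_sum f s <-> has_sum f s.
Proof.
  assert (E : forall n, psum f (S n) = sum_f_R0 f n).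
  { induction n; simpl in *; [lra | rewrite <- IHn; reflexivity]. }
  split; intros H e He; destruct (H e He) as [N HN].
  - exists (S N); intros [|n] Hn; [lia |]. rewrite E. apply HN; lia.
  - exists N; intros n Hn. rewrite <- E. apply HN; lia.
Qed.

(** * The outer measure *)

Definition p (a : nat) : R := (/2) ^ (S a).

Lemma half_pow_pos n : 0 < (/2) ^ n.
Proof. apply pow_lt; lra. Qed.

Lemma half_pow_le_1 n : (/2) ^ n <= 1.
Proof. induction n; simpl; [lra | pose proof (half_pow_pos n); lra]. Qed.

Lemma half_pow_antitone m n : (m <= n)%nat -> (/2) ^ n <= (/2) ^ m.
Proof.
  intros H. replace n with (m + (n - m))%nat by lia. rewrite pow_add.
  pose proof (half_pow_pos m); pose proof (half_pow_le_1 (n - m)); nra.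
Qed.

Lemma half_pow_small e : 0 < e -> exists N, (/2) ^ N < e.
Proof.
  intros He. destruct (pow_lt_1_zero (/2)) with (y := e) as [N HN];
    [rewrite Rabs_right; lra | lra |].
  exists N. specialize (HN N (le_n _)). rewrite Rabs_right in HN; auto.
  left; apply half_pow_pos.
Qed.

Lemma le_of_le_add_half_pow x y : (forall M, x <= y + (/2) ^ M) -> x <= y.
Proof.
  intros H. apply Rle_plus_epsilon. intros e He.
  destruct (half_pow_small e He) as [M HM]. specialize (H M); lra.
Qed.

Lemma p_pos a : 0 < p a.
Proof. apply half_pow_pos. Qed.

Lemma p_antitone a b : (a <= b)%nat -> p b <= p a.
Proof. intros H. apply half_pow_antitone; lia. Qed.

Lemma psum_p n : psum p n = 1 - (/2) ^ n.
Proof. induction n; simpl; [lra |]. rewrite IHn. unfold p; simpl. lra. Qed.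

Lemma Inf_is_lub (A : R -> Prop) : (exists x, A x) -> (forall x, A x -> 0 <= x) ->
  is_lub (fun x => A (- x)) (- Inf A).
Proof.
  intros [x Hx] H0. unfold Inf.
  assert (Hb : bound (fun y => A (- y))).
  { exists 0. intros y Hy. specialize (H0 _ Hy); lra. }
  assert (He : exists y, A (- y)) by (exists (- x); rewrite Ropp_involutive; auto).
  destruct (completeness _ Hb He) as [m Hm].
  apply (epsilon_spec (inhabits 0) (fun r => is_lub (fun x => A (- x)) (- r))).
  exists (- m). rewrite Ropp_involutive; auto.
Qed.

Lemma Inf_le (A : R -> Prop) a : A a -> (forall x, A x -> 0 <= x) -> Inf A <= a.
Proof.
  intros Ha H0. destruct (Inf_is_lub A (ex_intro _ a Ha) H0) as [Hu _].
  assert (- a <= - Inf A); [apply Hu; rewrite Ropp_involutive; auto | lra].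
Qed.

Lemma Inf_ge (A : R -> Prop) b : (exists x, A x) -> (forall x, A x -> 0 <= x) ->
  (forall x, A x -> b <= x) -> b <= Inf A.
Proof.
  intros Hne H0 Hb. destruct (Inf_is_lub A Hne H0) as [_ Hl].
  assert (- Inf A <= - b); [| lra]. apply Hl. intros y Hy. specialize (Hb _ Hy); lra.
Qed.

Lemma Inf_approx (A : R -> Prop) e : (exists x, A x) -> (forall x, A x -> 0 <= x) ->
  0 < e -> exists a, A a /\ a < Inf A + e.
Proof.
  intros Hne H0 He. apply NNPP; intro Hn.
  assert (Inf A + e <= Inf A); [| lra].
  apply Inf_ge; auto. intros x Hx. apply Rnot_lt_le. intro. apply Hn; eauto.
Qed.

Lemma cyl_weight_cons a l : cyl_weight (a :: l) = p a * cyl_weight l.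
Proof. reflexivity. Qed.

Lemma cyl_weight_pos l : 0 < cyl_weight l.
Proof.
  induction l as [|a l IH]; [simpl; lra |].
  rewrite cyl_weight_cons; pose proof (p_pos a); nra.
Qed.

Lemma cyl_weight_nonneg l : 0 <= cyl_weight l.
Proof. left; apply cyl_weight_pos. Qed.

Lemma cyl_weight_zeros k : cyl_weight (repeat O k) = (/2) ^ k.
Proof.
  induction k; simpl repeat; [reflexivity |].
  rewrite cyl_weight_cons, IHk. unfold p; simpl; ring.
Qed.

Definition covers (C : nat -> list nat) (S : Omega -> Prop) : Prop :=
  forall om, S om -> exists i, cyl (C i) om.

Definition cover_sums (S : Omega -> Prop) (s : R) : Prop :=
  exists C, covers C S /\ infinite_sum (fun i => cyl_weight (C i)) s.

Lemma cover_sums_nonneg S s : cover_sums S s -> 0 <= s.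
Proof.
  intros [C [_ H]]. apply infinite_sum_has_sum in H.
  exact (has_sum_nonneg _ _ (fun i => cyl_weight_nonneg (C i)) H).
Qed.

Lemma cyl_single a om : cyl [a] om <-> om O = a.
Proof.
  unfold cyl; simpl; split.
  - intros H; apply H; lia.
  - intros H [|j] Hj; [auto | lia].
Qed.

Lemma covers_first_letter S : covers (fun a => [a]) S.
Proof. intros om _. exists (om O). apply cyl_single; auto. Qed.

Lemma psum_first_letter n : psum (fun a => cyl_weight [a]) n = 1 - (/2) ^ n.
Proof. rewrite <- psum_p. apply psum_ext. intro; rewrite cyl_weight_cons; simpl; ring. Qed.

Lemma cover_sums_exists S : exists s, cover_sums S s.
Proof.
  destruct (has_sum_bounded (fun a => cyl_weight [a]) 1) as [s [Hs _]].
  - intro; apply cyl_weight_nonneg.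
  - intro n; rewrite psum_first_letter; pose proof (half_pow_pos n); lra.
  - exists s, (fun a => [a]). split; [apply covers_first_letter | apply infinite_sum_has_sum; exact Hs].
Qed.

Lemma Pout_le_cover S C b : covers C S ->
  (forall n, psum (fun i => cyl_weight (C i)) n <= b) -> Pout S <= b.
Proof.
  intros Hc Hb.
  destruct (has_sum_bounded _ b (fun i => cyl_weight_nonneg (C i)) Hb) as [s [Hs Hsb]].
  assert (Pout S <= s); [| lra].
  apply Inf_le; [| apply cover_sums_nonneg].
  exists C; split; auto. apply infinite_sum_has_sum; auto.
Qed.

Lemma Pout_ge S b :
  (forall C s, covers C S -> has_sum (fun i => cyl_weight (C i)) s -> b <= s) -> b <= Pout S.
Proof.
  intros H. apply Inf_ge; [apply cover_sums_exists | apply cover_sums_nonneg |].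
  intros x [C [Hc Hx]]. apply (H C); auto. apply infinite_sum_has_sum; auto.
Qed.

Lemma Pout_approx S e : 0 < e ->
  exists C, covers C S /\ forall n, psum (fun i => cyl_weight (C i)) n <= Pout S + e.
Proof.
  intros He.
  destruct (Inf_approx _ e (cover_sums_exists S) (cover_sums_nonneg S) He)
    as [a [[C [Hc Ha]] Hlt]].
  exists C; split; auto. intro n. apply infinite_sum_has_sum in Ha.
  pose proof (psum_le_has_sum _ _ n (fun i => cyl_weight_nonneg (C i)) Ha).
  change (Pout S) with (Inf (cover_sums S)); lra.
Qed.

Lemma Pout_nonneg S : 0 <= Pout S.
Proof.
  apply Pout_ge. intros C s _ Hs. exact (has_sum_nonneg _ _ (fun i => cyl_weight_nonneg (C i)) Hs).
Qed.

Lemma Pout_mono S T : (forall om, S om -> T om) -> Pout S <= Pout T.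
Proof.
  intros H. apply Rle_plus_epsilon. intros e He.
  destruct (Pout_approx T e He) as [C [Hc Hb]].
  apply (Pout_le_cover S C); auto. intros om Hs; apply Hc, H, Hs.
Qed.

Lemma Pout_ext S T : (forall om, S om <-> T om) -> Pout S = Pout T.
Proof. intros H; apply Rle_antisym; apply Pout_mono; intros om; apply H. Qed.

Lemma Pout_le_1 S : Pout S <= 1.
Proof.
  apply (Pout_le_cover S _ _ (covers_first_letter S)).
  intro n; rewrite psum_first_letter; pose proof (half_pow_pos n); lra.
Qed.

(* Padding for covers, of negligible total weight. *)
Lemma psum_filler K n : psum (fun i => cyl_weight (repeat O (S i + K))) n <= (/2) ^ K.
Proof.
  rewrite (psum_ext _ (fun i => (/2) ^ K * p i)).
  - rewrite psum_scal, psum_p. pose proof (half_pow_pos K); pose proof (half_pow_pos n). nra.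
  - intro i. rewrite cyl_weight_zeros, pow_add. unfold p. ring.
Qed.

Lemma Pout_empty Z : (forall om, ~ Z om) -> Pout Z = 0.
Proof.
  intros H. apply Rle_antisym; [| apply Pout_nonneg].
  apply le_of_le_add_half_pow. intro K. rewrite Rplus_0_l.
  apply (Pout_le_cover Z (fun i => repeat O (S i + K))).
  - intros om Hs; exfalso; apply (H om Hs).
  - intro n; apply psum_filler.
Qed.

(** * Total mass *)

(* [cond_weight D u] is the conditional probability of the cylinder [D] given the cylinder [u]. *)
Fixpoint cond_weight (D u : list nat) : R :=
  match D, u with
  | [], _ => 1
  | _, [] => cyl_weight D
  | d :: D', b :: u' => if Nat.eqb d b then cond_weight D' u' else 0
  end.

Lemma cond_weight_nil D : cond_weight D [] = cyl_weight D.
Proof. destruct D; reflexivity. Qed.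

Lemma cond_weight_nonneg D u : 0 <= cond_weight D u.
Proof.
  revert u; induction D as [|d D IH]; intros [|b u]; simpl; try lra.
  - apply Rmult_le_pos; [left; apply p_pos | apply cyl_weight_nonneg].
  - destruct (Nat.eqb d b); auto; lra.
Qed.

Lemma cond_weight_prefix D u : (length D <= length u)%nat ->
  (forall j, (j < length D)%nat -> nth j D O = nth j u O) -> cond_weight D u = 1.
Proof.
  revert u; induction D as [|d D IH]; intros u Hl Hn; [reflexivity |].
  destruct u as [|b u]; simpl in Hl; [lia |].
  assert (d = b) as <- by (apply (Hn O); simpl; lia).
  simpl; rewrite Nat.eqb_refl. apply IH; [lia |].
  intros j Hj. apply (Hn (S j)). simpl; lia.
Qed.

Lemma cond_weight_extend D u M :
  psum (fun a => p a * cond_weight D (u ++ [a])) M <= cond_weight D u.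
Proof.
  assert (Hfull : psum p M <= 1) by (rewrite psum_p; pose proof (half_pow_pos M); lra).
  revert D; induction u as [|b u IH]; intros [|d D]; cbn [cond_weight app].
  - rewrite (psum_ext _ p) by (intro; ring). exact Hfull.
  - rewrite cyl_weight_cons, (psum_ext _ (fun a => if Nat.eqb d a then p d * cyl_weight D else 0)).
    + apply psum_indicator. pose proof (p_pos d); pose proof (cyl_weight_pos D); nra.
    + intro a. cbn [cond_weight]. rewrite cond_weight_nil.
      destruct (Nat.eqb_spec d a) as [<- |]; ring.
  - rewrite (psum_ext _ p) by (intro; ring). exact Hfull.
  - destruct (Nat.eqb d b).
    + apply IH.
    + rewrite (psum_ext _ (fun _ => 0)) by (intro; ring). rewrite psum_zero; lra.
Qed.

Definition cond_cover_le (C : nat -> list nat) (t : R) (u : list nat) : Prop :=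
  forall N, psum (fun i => cond_weight (C i) u) N <= t.

Lemma psum_exceed_uniform (g : nat -> nat -> R) t M : (forall a i, 0 <= g a i) ->
  (forall a, exists N, t < psum (g a) N) ->
  exists N, forall a, (a < M)%nat -> t < psum (g a) N.
Proof.
  intros H0 H. induction M as [|M [N1 H1]].
  - exists O; intros; lia.
  - destruct (H M) as [N2 H2]. exists (max N1 N2). intros a Ha.
    destruct (Nat.eq_dec a M) as [-> | Hne].
    + eapply Rlt_le_trans; [exact H2 | apply psum_mono; [apply H0 | lia]].
    + eapply Rlt_le_trans; [apply (H1 a); lia | apply psum_mono; [apply H0 | lia]].
Qed.

(* Otherwise averaging over the next letter would push the conditional weight above [t]. *)
Lemma cond_cover_le_extend C t t' u : cond_cover_le C t u -> t < t' -> 0 <= t ->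
  exists a, cond_cover_le C t' (u ++ [a]).
Proof.
  intros HG Htt Ht. apply NNPP; intro Hn.
  assert (Hall : forall a, exists N, t' < psum (fun i => cond_weight (C i) (u ++ [a])) N).
  { intro a. apply NNPP; intro H2. apply Hn. exists a. intro N.
    apply Rnot_lt_le. intro; apply H2; eauto. }
  destruct (half_pow_small ((t' - t) / t')) as [M HM]; [apply Rdiv_lt_0_compat; lra |].
  destruct (psum_exceed_uniform (fun a i => cond_weight (C i) (u ++ [a])) t' M
              (fun a i => cond_weight_nonneg _ _) Hall) as [N HN].
  assert (H1 : t' * psum p M
               <= psum (fun a => p a * psum (fun i => cond_weight (C i) (u ++ [a])) N) M).
  { rewrite <- psum_scal. apply psum_le. intros a Ha. specialize (HN a Ha).
    pose proof (p_pos a). nra. }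
  assert (H2 : psum (fun a => p a * psum (fun i => cond_weight (C i) (u ++ [a])) N) M
               <= psum (fun i => cond_weight (C i) u) N).
  { rewrite (psum_ext _ (fun a => psum (fun i => p a * cond_weight (C i) (u ++ [a])) N))
      by (intro; rewrite psum_scal; reflexivity).
    rewrite psum_swap. apply psum_le. intros i _. apply cond_weight_extend. }
  specialize (HG N). rewrite psum_p in H1.
  assert (t' * (/2) ^ M < t' - t).
  { apply (Rmult_lt_compat_r t') in HM; [| lra].
    unfold Rdiv in HM. rewrite Rmult_assoc, Rinv_l in HM; lra. }
  lra.
Qed.

Definition threshold (s : R) (k : nat) : R := 1 - (1 - s) * (/2) ^ k.

Fixpoint escape_path (C : nat -> list nat) (s : R) (k : nat) : list nat :=
  match k with
  | O => []
  | S k => escape_path C s k ++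
      [epsilon (inhabits O) (fun a => cond_cover_le C (threshold s (S k)) (escape_path C s k ++ [a]))]
  end.

Lemma escape_path_length C s k : length (escape_path C s k) = k.
Proof. induction k; simpl; [reflexivity | rewrite length_app, IHk; simpl; lia]. Qed.

Lemma escape_path_nth C s k j : (j < k)%nat ->
  nth j (escape_path C s k) O = nth j (escape_path C s (S j)) O.
Proof.
  intros H; induction H; [reflexivity |].
  simpl. rewrite app_nth1; auto. rewrite escape_path_length; lia.
Qed.

Lemma escape_path_spec C s k : 0 <= s < 1 -> cond_cover_le C s [] ->
  cond_cover_le C (threshold s k) (escape_path C s k).
Proof.
  intros Hs H0. induction k.
  - unfold threshold; simpl. replace (1 - (1 - s) * 1) with s by ring. exact H0.
  - simpl. apply (epsilon_spec (inhabits O)).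
    pose proof (half_pow_pos k). pose proof (half_pow_le_1 k).
    apply (cond_cover_le_extend C (threshold s k)); unfold threshold; simpl; auto; nra.
Qed.

Lemma Pout_full : Pout (fun _ => True) = 1.
Proof.
  apply Rle_antisym; [apply Pout_le_1 |].
  apply Pout_ge. intros C s Hc Hs.
  destruct (Rlt_dec s 1) as [Hlt |]; [exfalso | lra].
  pose proof (has_sum_nonneg _ _ (fun i => cyl_weight_nonneg (C i)) Hs) as Hs0.
  assert (HG0 : cond_cover_le C s []).
  { intro N. rewrite (psum_ext _ (fun i => cyl_weight (C i))) by (intro; apply cond_weight_nil).
    apply psum_le_has_sum; auto using cyl_weight_nonneg. }
  set (om := fun j => nth j (escape_path C s (S j)) O).
  destruct (Hc om I) as [i Hi].
  set (L := length (C i)).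
  pose proof (escape_path_spec C s L (conj Hs0 Hlt) HG0 (S i)) as HG; simpl in HG.
  assert (H1 : cond_weight (C i) (escape_path C s L) = 1).
  { apply cond_weight_prefix; [rewrite escape_path_length; unfold L; lia |].
    intros j Hj. rewrite <- (Hi j Hj). symmetry; apply escape_path_nth; exact Hj. }
  pose proof (psum_nonneg (fun i0 => cond_weight (C i0) (escape_path C s L)) i
                (fun _ => cond_weight_nonneg _ _)).
  rewrite H1 in HG. unfold threshold in HG. pose proof (half_pow_pos L). nra.
Qed.

(** * Decomposition along the first letter *)

Definition ocons (a : nat) (om : Omega) : Omega :=
  fun j => match j with O => a | S j => om j end.
Definition otail (om : Omega) : Omega := fun j => om (S j).
Definition section (a : nat) (Z : Omega -> Prop) : Omega -> Prop := fun om => Z (ocons a om).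

Lemma ocons_otail om : ocons (om O) (otail om) = om.
Proof. apply functional_extensionality; intros [|j]; reflexivity. Qed.

Lemma cyl_cons b l om : cyl (b :: l) om <-> om O = b /\ cyl l (otail om).
Proof.
  unfold cyl, otail; simpl; split.
  - intros H; split; [apply (H O); lia |]. intros j Hj; apply (H (S j)); lia.
  - intros [H0 H] [|j] Hj; [auto | apply H; lia].
Qed.

Definition series (f : nat -> R) : R := epsilon (inhabits 0) (fun s => has_sum f s).

Lemma series_spec f s : has_sum f s -> has_sum f (series f).
Proof. intros H; apply (epsilon_spec (inhabits 0) (fun s => has_sum f s)); eauto. Qed.

Lemma p_cond_weight_le a l : p a * cond_weight l [a] <= cyl_weight l.
Proof.
  pose proof (cond_weight_extend l [] (S a)) as H. rewrite cond_weight_nil in H.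
  eapply Rle_trans; [| exact H].
  apply (psum_term_le (fun b => p b * cond_weight l ([] ++ [b]))); [| lia].
  intro b; apply Rmult_le_pos; [left; apply p_pos | apply cond_weight_nonneg].
Qed.

Lemma has_sum_cond_weight a C s : has_sum (fun i => cyl_weight (C i)) s ->
  has_sum (fun i => cond_weight (C i) [a]) (series (fun i => cond_weight (C i) [a])).
Proof.
  intros Hs. pose proof (p_pos a).
  destruct (has_sum_bounded (fun i => cond_weight (C i) [a]) (s / p a)) as [t [Ht _]].
  - intro; apply cond_weight_nonneg.
  - intro n. apply (Rmult_le_reg_l (p a)); auto.
    replace (p a * (s / p a)) with s by (field; lra).
    rewrite <- psum_scal. eapply Rle_trans; [apply psum_le; intros; apply p_cond_weight_le |].
    apply psum_le_has_sum; auto using cyl_weight_nonneg.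
  - exact (series_spec _ _ Ht).
Qed.

(* Cylinders of [C] not starting with [a] are replaced by padding. *)
Definition section_cover (C : nat -> list nat) (a K : nat) (i : nat) : list nat :=
  match C i with
  | [] => []
  | b :: t => if Nat.eqb b a then t else repeat O (S i + K)
  end.

Lemma covers_section Z C a K : covers C Z -> covers (section_cover C a K) (section a Z).
Proof.
  intros Hc om Hz. destruct (Hc _ Hz) as [i Hi]. exists i. unfold section_cover.
  destruct (C i) as [|b t]; [intros j Hj; simpl in Hj; lia |].
  apply cyl_cons in Hi as [H0 H1]. simpl in H0. subst b.
  rewrite Nat.eqb_refl. exact H1.
Qed.

Lemma section_cover_weight C a K i :
  cyl_weight (section_cover C a K i) <= cond_weight (C i) [a] + cyl_weight (repeat O (S i + K)).
Proof.
  unfold section_cover. pose proof (cyl_weight_pos (repeat O (S i + K))).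
  destruct (C i) as [|b t]; cbn [cond_weight]; [change (cyl_weight []) with 1; lra |].
  destruct (Nat.eqb b a); [rewrite cond_weight_nil |]; lra.
Qed.

Lemma psum_sections_le Z M : psum (fun a => p a * Pout (section a Z)) M <= Pout Z.
Proof.
  apply Pout_ge. intros C s Hc Hs.
  apply le_of_le_add_half_pow. intro K.
  set (T := fun a => series (fun i => cond_weight (C i) [a])).
  assert (HT : forall a, Pout (section a Z) <= T a + (/2) ^ K).
  { intro a. apply (Pout_le_cover _ (section_cover C a K)); [apply covers_section; auto |].
    intro n. eapply Rle_trans; [apply psum_le; intros; apply section_cover_weight |].
    rewrite psum_plus. pose proof (psum_filler K n).
    pose proof (psum_le_has_sum _ _ n (fun i => cond_weight_nonneg _ _) (has_sum_cond_weight a C s Hs)).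
    unfold T; lra. }
  assert (H1 : psum (fun a => p a * Pout (section a Z)) M <= psum (fun a => p a * T a) M + (/2) ^ K).
  { eapply Rle_trans.
    { apply psum_le. intros a _. apply Rmult_le_compat_l; [left; apply p_pos | apply HT]. }
    rewrite (psum_ext _ (fun a => p a * T a + (/2) ^ K * p a)) by (intro; ring).
    rewrite psum_plus, psum_scal, psum_p.
    pose proof (half_pow_pos K); pose proof (half_pow_pos M). nra. }
  assert (H2 : psum (fun a => p a * T a) M <= s).
  { apply (has_sum_le (fun i => psum (fun a => p a * cond_weight (C i) [a]) M)
                       (fun i => cyl_weight (C i))); auto.
    - apply has_sum_psum. intro a. apply has_sum_scal, (has_sum_cond_weight a C s Hs).
    - intro i. rewrite <- cond_weight_nil. apply (cond_weight_extend (C i) []). }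
  lra.
Qed.

Lemma Pout_approx_family (Z : nat -> Omega -> Prop) e : 0 < e ->
  exists D : nat -> nat -> list nat, forall a,
    covers (D a) (Z a) /\ forall n, psum (fun i => cyl_weight (D a i)) n <= Pout (Z a) + e.
Proof.
  intros He.
  exists (fun a => epsilon (inhabits (fun _ => []))
    (fun C => covers C (Z a) /\ forall n, psum (fun i => cyl_weight (C i)) n <= Pout (Z a) + e)).
  intro a. apply (epsilon_spec (inhabits (fun _ => []))), Pout_approx, He.
Qed.

Lemma divmod_unique q r K : (r < K)%nat -> ((q * K + r) / K = q /\ (q * K + r) mod K = r)%nat.
Proof.
  intros H. assert (Hd : ((q * K + r) / K = q)%nat).
  { rewrite Nat.div_add_l, Nat.div_small by lia. lia. }
  split; auto. pose proof (Nat.div_mod (q * K + r) K) as X. rewrite Hd in X. lia.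
Qed.

(* Interleaves the covers [a :: D a] of the first letters [a < M] with the one-letter
   cylinders [M + q], which cover everything else at cost [2^-M]. *)
Definition merged_cover (D : nat -> nat -> list nat) (M i : nat) : list nat :=
  let r := (i mod (S M))%nat in let q := (i / (S M))%nat in
  if Nat.ltb r M then r :: D r q else [(M + q)%nat].

Lemma merged_cover_at D M q r : (r <= M)%nat ->
  merged_cover D M (q * S M + r) = if Nat.ltb r M then r :: D r q else [(M + q)%nat].
Proof.
  intros H. unfold merged_cover. destruct (divmod_unique q r (S M)) as [-> ->]; [lia | reflexivity].
Qed.

Lemma covers_merged Z D M :
  (forall a, covers (D a) (section a Z)) -> covers (merged_cover D M) Z.
Proof.
  intros HD om Hz. set (a := om O).
  destruct (Nat.ltb_spec a M) as [Ha | Ha].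
  - assert (Hs : section a Z (otail om)) by (unfold section, a; rewrite ocons_otail; auto).
    destruct (HD a _ Hs) as [q Hq].
    exists (q * S M + a)%nat. rewrite merged_cover_at by lia.
    destruct (Nat.ltb_spec a M); [| lia]. apply cyl_cons; split; auto.
  - exists ((a - M) * S M + M)%nat. rewrite merged_cover_at by lia.
    destruct (Nat.ltb_spec M M); [lia |]. apply cyl_single. unfold a; lia.
Qed.

Lemma Pout_le_psum_sections Z M e : 0 < e ->
  Pout Z <= psum (fun a => p a * Pout (section a Z)) M + e + (/2) ^ M.
Proof.
  intros He.
  destruct (Pout_approx_family (fun a => section a Z) e He) as [D HD].
  apply (Pout_le_cover Z (merged_cover D M)); [apply covers_merged; intro; apply HD |].
  intro n.
  apply Rle_trans with (psum (fun i => cyl_weight (merged_cover D M i)) (n * S M)).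
  { apply psum_mono; [intro; apply cyl_weight_nonneg | destruct n; simpl; lia]. }
  rewrite psum_blocks, psum_swap. simpl psum at 1.
  assert (HL : psum (fun q => cyl_weight (merged_cover D M (q * S M + M)%nat)) n <= (/2) ^ M).
  { rewrite (psum_ext _ (fun q => (/2) ^ M * p q)).
    - rewrite psum_scal, psum_p. pose proof (half_pow_pos M); pose proof (half_pow_pos n); nra.
    - intro q. rewrite merged_cover_at by lia. destruct (Nat.ltb_spec M M); [lia |].
      rewrite cyl_weight_cons. unfold p.
      replace (S (M + q)) with (M + S q)%nat by lia. rewrite pow_add. simpl; ring. }
  assert (HR : psum (fun j => psum (fun q => cyl_weight (merged_cover D M (q * S M + j)%nat)) n) M
               <= psum (fun a => p a * Pout (section a Z)) M + e).
  { apply Rle_trans with (psum (fun a => p a * Pout (section a Z) + e * p a) M).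
    - apply psum_le. intros j Hj.
      rewrite (psum_ext _ (fun q => p j * cyl_weight (D j q))).
      + rewrite psum_scal. pose proof (proj2 (HD j) n). pose proof (p_pos j). nra.
      + intro q. rewrite merged_cover_at by lia.
        destruct (Nat.ltb_spec j M); [apply cyl_weight_cons | lia].
    - rewrite psum_plus, psum_scal, psum_p. pose proof (half_pow_pos M). nra. }
  lra.
Qed.

Theorem has_sum_sections Z : has_sum (fun a => p a * Pout (section a Z)) (Pout Z).
Proof.
  assert (Hnn : forall a, 0 <= p a * Pout (section a Z)).
  { intro a. pose proof (p_pos a); pose proof (Pout_nonneg (section a Z)); nra. }
  destruct (has_sum_bounded _ (Pout Z) Hnn (psum_sections_le Z)) as [L [HL HLe]].
  replace (Pout Z) with L; auto. apply Rle_antisym; auto.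
  apply le_of_le_add_half_pow; intro M. apply Rle_plus_epsilon; intros e He.
  pose proof (Pout_le_psum_sections Z M e He).
  pose proof (psum_le_has_sum _ _ M Hnn HL). lra.
Qed.

Lemma Pout_scal_of_sections A B c :
  (forall a, Pout (section a A) = c * Pout (section a B)) -> Pout A = c * Pout B.
Proof.
  intros H. apply (has_sum_unique (fun a => p a * Pout (section a A))); [apply has_sum_sections |].
  apply (has_sum_ext (fun a => c * (p a * Pout (section a B)))); [intro a; rewrite H; ring |].
  apply has_sum_scal, has_sum_sections.
Qed.

Lemma Pout_le_scal_of_sections A B c :
  (forall a, Pout (section a A) <= c * Pout (section a B)) -> Pout A <= c * Pout B.
Proof.
  intros H. apply (has_sum_le _ _ _ _ (has_sum_sections A) (has_sum_scal c _ _ (has_sum_sections B))).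
  intro a. specialize (H a). pose proof (p_pos a). nra.
Qed.

Lemma P0_T0_invariant F : P0 (preim T0 F) = P0 F.
Proof.
  rewrite <- (Rmult_1_r (P0 F)), <- Pout_full. apply Pout_scal_of_sections.
  intro a. rewrite (Pout_ext (section a (fun _ => True)) (fun _ => True)) by tauto.
  rewrite Pout_full, Rmult_1_r. reflexivity.
Qed.

(** * Runs of consecutive letters *)

(* [run_prob k L = p (k+1) * ... * p (k+L)]: the probability that the [L] letters following
   the letter [k] are [k+1, ..., k+L]. *)
Fixpoint run_prob (k L : nat) : R :=
  match L with O => 1 | S L => p (S k) * run_prob (S k) L end.

Lemma run_prob_nonneg k L : 0 <= run_prob k L.
Proof.
  revert k; induction L; intro k; simpl; [lra |].
  pose proof (p_pos (S k)); specialize (IHL (S k)); nra.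
Qed.

Lemma run_prob_antitone L j k : (j <= k)%nat -> run_prob k L <= run_prob j L.
Proof.
  revert j k; induction L; intros j k H; simpl; [lra |].
  pose proof (p_antitone (S j) (S k) ltac:(lia)). pose proof (IHL (S j) (S k) ltac:(lia)).
  pose proof (run_prob_nonneg (S k) L). pose proof (p_pos (S k)). nra.
Qed.

Lemma run_prob_le_half_pow k L : run_prob k L <= (/2) ^ L.
Proof.
  revert k; induction L; intro k; simpl; [lra |].
  specialize (IHL (S k)). pose proof (run_prob_nonneg (S k) L).
  pose proof (p_antitone O (S k) ltac:(lia)). unfold p at 2 in H0. simpl in H0.
  nra.
Qed.

Lemma run_prob_succ_r k L : run_prob k (S L) = run_prob k L * p (S (k + L)).
Proof.
  revert k; induction L; intro k; [simpl; rewrite Nat.add_0_r; ring |].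
  change (run_prob k (S (S L))) with (p (S k) * run_prob (S k) (S L)).
  change (run_prob k (S L)) with (p (S k) * run_prob (S k) L).
  rewrite IHL. replace (k + S L)%nat with (S k + L)%nat by lia. ring.
Qed.

Definition ones_prefix (n : nat) : Omega -> Prop := fun om => forall j, (j < n)%nat -> Theta om j = true.

Lemma Pout_section_ones_prefix n a : Pout (section a (ones_prefix n)) = run_prob a n.
Proof.
  revert a; induction n; intro a.
  - simpl. rewrite <- Pout_full. apply Pout_ext. intro om; split; auto; intros _ j Hj; lia.
  - pose proof (has_sum_sections (section a (ones_prefix (S n)))) as H.
    rewrite (has_sum_single _ _ (S a) H).
    + simpl. rewrite <- IHn. f_equal. apply Pout_ext. intro om. unfold section, ones_prefix. split.
      * intros Hj j Hlt. apply (Hj (S j)); lia.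
      * intros Hj [|j] Hlt; [apply Nat.eqb_refl | apply (Hj j); lia].
    + intros x Hx. rewrite Pout_empty; [ring |].
      intros om Hs. specialize (Hs O ltac:(lia)).
      apply Nat.eqb_eq in Hs. auto.
Qed.

Lemma Pout_ones_prefix_succ n : Pout (ones_prefix (S n)) <= p (S n) * Pout (ones_prefix n).
Proof.
  apply Pout_le_scal_of_sections. intro a.
  rewrite !Pout_section_ones_prefix, run_prob_succ_r.
  pose proof (p_antitone (S n) (S (a + n)) ltac:(lia)). pose proof (run_prob_nonneg a n). nra.
Qed.

Lemma ratio_le x y c : 0 <= x -> 0 <= y -> 0 <= c -> x <= c * y -> 0 <= x / y <= c.
Proof.
  intros Hx Hy Hc Hxy. destruct (Req_dec y 0) as [-> | Hz].
  - unfold Rdiv; rewrite Rinv_0, Rmult_0_r; lra.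
  - assert (Hy' : 0 < / y) by (apply Rinv_0_lt_compat; lra).
    split; [unfold Rdiv; apply Rmult_le_pos; lra |].
    apply (Rmult_le_reg_r y); [lra |]. unfold Rdiv; rewrite Rmult_assoc, Rinv_l; lra.
Qed.

Lemma ones_cond_prob_cv0 (wb : Omega0) : (forall j, wb j = true) ->
  Un_cv (fun n => P0 (inter (Acyl wb (S n)) (Acyl wb n)) / P0 (Acyl wb n)) 0.
Proof.
  intros Hw.
  assert (E1 : forall n, P0 (Acyl wb n) = Pout (ones_prefix n)).
  { intro n. apply Pout_ext. intro om. unfold preim, Acyl, ones_prefix.
    split; intros H j Hj; rewrite H, ?Hw; auto. }
  assert (E2 : forall n, P0 (inter (Acyl wb (S n)) (Acyl wb n)) = Pout (ones_prefix (S n))).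
  { intro n. apply Pout_ext. intro om. unfold preim, inter, Acyl, ones_prefix. split.
    - intros [H _] j Hj; rewrite H, ?Hw; auto.
    - intros H; split; intros j Hj; rewrite H, ?Hw; auto; lia. }
  intros e He. destruct (half_pow_small e He) as [N HN]. exists N. intros n Hn.
  unfold Rdist. rewrite E1, E2, Rminus_0_r.
  assert (Hp : p (S n) <= (/2) ^ n) by (apply half_pow_antitone; lia).
  pose proof (ratio_le _ _ _ (Pout_nonneg _) (Pout_nonneg _) (Rlt_le _ _ (p_pos (S n)))
                (Pout_ones_prefix_succ n)).
  pose proof (half_pow_antitone N n Hn).
  rewrite Rabs_right; lra.
Qed.

(** * Conditioning on the first letter *)

Definition bcons (b : bool) (v : Omega0) : Omega0 := fun j => match j with O => b | S j => v j end.
Definition bsection (b : bool) (F : Omega0 -> Prop) : Omega0 -> Prop := fun v => F (bcons b v).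

(* [P0_given F k] is the probability of [Theta om \in F] given that the first letter is [k]. *)
Definition P0_given (F : Omega0 -> Prop) (k : nat) : R := Pout (section k (preim Theta F)).

(* [P0_after_run F L] is the [P0]-probability of [{v | 1^L 0 v \in F}]. *)
Fixpoint P0_after_run (F : Omega0 -> Prop) (L : nat) : R :=
  match L with O => P0 (bsection false F) | S L => P0_after_run (bsection true F) L end.

Lemma P0_given_nonneg F k : 0 <= P0_given F k.
Proof. apply Pout_nonneg. Qed.

Lemma P0_after_run_nonneg F L : 0 <= P0_after_run F L.
Proof. revert F; induction L; intro F; [apply Pout_nonneg | apply IHL]. Qed.

Lemma has_sum_P0_given F : has_sum (fun x => p x * P0_given F x) (P0 F).
Proof. apply has_sum_sections. Qed.

Lemma Theta_ocons_ocons k x om :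
  Theta (ocons k (ocons x om)) = bcons (theta k x) (Theta (ocons x om)).
Proof. apply functional_extensionality; intros [|j]; reflexivity. Qed.

(* After the letter [k], the next bit of [Theta] is [1] exactly when the next letter is [k+1]. *)
Lemma P0_given_split F k : P0_given F k =
  P0 (bsection false F) - p (S k) * P0_given (bsection false F) (S k)
  + p (S k) * P0_given (bsection true F) (S k).
Proof.
  pose proof (has_sum_sections (section k (preim Theta F))) as H.
  apply (has_sum_ext _ (fun x => p x * P0_given (bsection (Nat.eqb x (S k)) F) x)) in H.
  2:{ intro x. f_equal. apply Pout_ext. intro om.
      unfold section, preim, bsection. rewrite Theta_ocons_ocons. reflexivity. }
  assert (Hoff : forall x, x <> S k ->
    p x * P0_given (bsection (Nat.eqb x (S k)) F) x = p x * P0_given (bsection false F) x).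
  { intros x Hx. apply Nat.eqb_neq in Hx. rewrite Hx. reflexivity. }
  pose proof (has_sum_update _ _ (S k) _ (has_sum_P0_given (bsection false F)) Hoff) as H2.
  unfold P0_given at 1. rewrite (has_sum_unique _ _ _ H H2), Nat.eqb_refl. ring.
Qed.

Lemma P0_given_le_runs M : forall F k,
  P0_given F k <= psum (fun L => run_prob k L * P0_after_run F L) M + run_prob k M.
Proof.
  induction M; intros F k.
  - simpl. pose proof (Pout_le_1 (section k (preim Theta F))). unfold P0_given; lra.
  - rewrite psum_shift.
    rewrite (psum_ext _ (fun L => p (S k) * (run_prob (S k) L * P0_after_run (bsection true F) L)))
      by (intro; simpl; ring).
    rewrite psum_scal. simpl run_prob. simpl P0_after_run at 1.
    rewrite P0_given_split. specialize (IHM (bsection true F) (S k)).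
    pose proof (P0_given_nonneg (bsection false F) (S k)). pose proof (p_pos (S k)).
    nra.
Qed.

Lemma psum_runs_le_P0_given M : forall F j,
  psum (fun L => run_prob (S j) L * P0_after_run F L) M <= P0_given F j + P0_given F (S j).
Proof.
  induction M; intros F j.
  - simpl. pose proof (P0_given_nonneg F j); pose proof (P0_given_nonneg F (S j)); lra.
  - rewrite psum_shift.
    rewrite (psum_ext _ (fun L =>
      p (S (S j)) * (run_prob (S (S j)) L * P0_after_run (bsection true F) L))) by (intro; simpl; ring).
    rewrite psum_scal. simpl run_prob. simpl P0_after_run at 1.
    rewrite (P0_given_split F j), (P0_given_split F (S j)).
    specialize (IHM (bsection true F) (S j)).
    pose proof (has_sum_two_le _ _ (S j) (S (S j))
      (fun x => Rmult_le_pos _ _ (Rlt_le _ _ (p_pos x)) (P0_given_nonneg (bsection false F) x))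
      (has_sum_P0_given (bsection false F)) ltac:(lia)).
    pose proof (p_antitone (S j) (S (S j)) ltac:(lia)).
    pose proof (P0_given_nonneg (bsection true F) (S j)). pose proof (p_pos (S (S j))).
    nra.
Qed.

(* The run expansion bounding [P0_given F k] decreases in [k], and at [k = 1] it is at most
   [P0_given F 0 + P0_given F 1], which is at most [4 * P0 F] because
   [P0 F >= P0_given F 0 / 2 + P0_given F 1 / 4]. *)
Lemma P0_given_le F k : P0_given F k <= 4 * P0 F.
Proof.
  pose proof (has_sum_two_le _ _ O 1
    (fun x => Rmult_le_pos _ _ (Rlt_le _ _ (p_pos x)) (P0_given_nonneg F x))
    (has_sum_P0_given F) ltac:(lia)) as H2.
  unfold p in H2. simpl in H2.
  pose proof (P0_given_nonneg F O); pose proof (P0_given_nonneg F 1).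
  destruct k as [|k]; [lra |].
  assert (P0_given F (S k) <= P0_given F O + P0_given F 1); [| lra].
  apply le_of_le_add_half_pow. intro M.
  pose proof (P0_given_le_runs M F (S k)). pose proof (psum_runs_le_P0_given M F O).
  pose proof (run_prob_le_half_pow (S k) M).
  assert (psum (fun L => run_prob (S k) L * P0_after_run F L) M
          <= psum (fun L => run_prob 1 L * P0_after_run F L) M).
  { apply psum_le. intros L _.
    apply Rmult_le_compat_r; [apply P0_after_run_nonneg | apply run_prob_antitone; lia]. }
  lra.
Qed.

(** * Mixing *)

Definition depends_on_first (N : nat) (X : Omega -> Prop) : Prop :=
  forall om om', (forall j, (j < N)%nat -> om j = om' j) -> (X om <-> X om').

Definition oshift (N : nat) (om : Omega) : Omega := fun j => om (j + N)%nat.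

Lemma oshift_0 om : oshift 0 om = om.
Proof. apply functional_extensionality; intro j. unfold oshift. rewrite Nat.add_0_r. reflexivity. Qed.

Lemma oshift_ocons N a om : oshift (S N) (ocons a om) = oshift N om.
Proof. apply functional_extensionality; intro j. unfold oshift. rewrite Nat.add_succ_r. reflexivity. Qed.

Lemma depends_on_first_section N X a : depends_on_first (S N) X -> depends_on_first N (section a X).
Proof. intros H om om' He. apply H. intros [|j] Hj; simpl; auto. apply He; lia. Qed.

Lemma depends_on_first_mono N M X : (N <= M)%nat -> depends_on_first N X -> depends_on_first M X.
Proof. intros HNM H om om' He. apply H. intros; apply He; lia. Qed.

Lemma depends_on_first_0 X : depends_on_first 0 X -> (forall om, X om) \/ (forall om, ~ X om).
Proof.
  intros H. destruct (classic (X (fun _ => O))) as [Hx | Hx]; [left | right]; intro om.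
  - apply (H (fun _ => O)); auto; intros; lia.
  - intro Ho. apply Hx. apply (H om); auto; intros; lia.
Qed.

Lemma Pout_independent N : forall X, depends_on_first N X -> forall Y : Omega -> Prop,
  Pout (fun om => X om /\ Y (oshift N om)) = Pout X * Pout Y.
Proof.
  induction N; intros X HX Y.
  - destruct (depends_on_first_0 X HX) as [Ht | Hf].
    + rewrite (Pout_ext X (fun _ => True)), Pout_full, Rmult_1_l by firstorder.
      apply Pout_ext. intro om. rewrite oshift_0. firstorder.
    + rewrite !Pout_empty by firstorder. ring.
  - rewrite Rmult_comm. apply Pout_scal_of_sections. intro a.
    rewrite (Pout_ext _ (fun om => section a X om /\ Y (oshift N om)))
      by (intro om; unfold section; rewrite oshift_ocons; reflexivity).
    rewrite IHN by (apply depends_on_first_section; auto). ring.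
Qed.

Lemma Pout_shift_Theta_le n : forall X, depends_on_first (S n) X -> forall F : Omega0 -> Prop,
  Pout (fun om => X om /\ F (Theta (oshift n om))) <= 4 * P0 F * Pout X.
Proof.
  induction n; intros X HX F; apply Pout_le_scal_of_sections; intro a.
  - destruct (depends_on_first_0 _ (depends_on_first_section 0 X a HX)) as [Ht | Hf].
    + rewrite (Pout_ext (section a X) (fun _ => True)), Pout_full, Rmult_1_r by firstorder.
      eapply Rle_trans; [| apply (P0_given_le F a)].
      apply Pout_mono. intros om [_ HF]. rewrite oshift_0 in HF. exact HF.
    + rewrite !Pout_empty by firstorder. lra.
  - rewrite (Pout_ext _ (fun om => section a X om /\ F (Theta (oshift n om))))
      by (intro om; unfold section; rewrite oshift_ocons; reflexivity).
    apply IHn, depends_on_first_section, HX.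
Qed.

Lemma Fcoord_depends n E : Fcoord n E ->
  forall v v', (forall j, (j < n)%nat -> v j = v' j) -> (E v <-> E v').
Proof.
  intros H. induction H as [A [j [b [Hj ->]]] | A _ IH | A _ IH | A B HAB _ IH]; intros v v' He.
  - rewrite (He j Hj). reflexivity.
  - specialize (IH v v' He). tauto.
  - split; intros [i Hi]; exists i; [apply (IH i v v' He) | apply (IH i v v' He)]; exact Hi.
  - rewrite <- (HAB v), <- (HAB v'). auto.
Qed.

(* Blocks at distance [m >= 1] are independent; at distance [0] the ratio is at most [4]. *)
Definition psi (m : nat) : R := match m with O => 4 | S _ => 0 end.

Lemma P0_psi_mixing : psi_mixing P0.
Proof.
  exists psi. split; [intros [|m]; simpl; lra |]. split.
  { intros e He. exists 1%nat. intros [|n] Hn; [lia |].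
    unfold Rdist; simpl. rewrite Rminus_0_r, Rabs_R0; lra. }
  intros m n E F HE HF.
  set (X := preim Theta E).
  assert (HX : depends_on_first (S n) X).
  { intros om om' He. apply (Fcoord_depends n E HE). intros j Hj.
    unfold Theta. rewrite (He j), (He (S j)) by lia. reflexivity. }
  change (P0 (inter E (preim (T0iter (n + m)) F)))
    with (Pout (fun om => X om /\ preim Theta F (oshift (n + m) om))).
  change (P0 E) with (Pout X).
  pose proof (Pout_nonneg X). pose proof (Pout_nonneg (preim Theta F)).
  destruct m as [|m]; simpl psi.
  - rewrite Nat.add_0_r. pose proof (Pout_shift_Theta_le n X HX F).
    pose proof (Pout_nonneg (fun om => X om /\ F (Theta (oshift n om)))).
    unfold P0, preim in *. apply Rabs_le; split; nra.
  - rewrite (Pout_independent (n + S m) X (depends_on_first_mono (S n) (n + S m) X ltac:(lia) HX)).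
    unfold P0. rewrite Rminus_diag, Rabs_R0. lra.
Qed.

Theorem theorem8 :
  (forall F, F0 F -> P0 (preim T0 F) = P0 F) /\
  psi_mixing P0 /\
  (forall w : Omega0, (forall j, w j = true) ->
     Un_cv (fun n => P0 (inter (Acyl w (S n)) (Acyl w n)) / P0 (Acyl w n)) 0).
Proof.
  split; [intros F _; apply P0_T0_invariant |].
  split; [apply P0_psi_mixing | apply ones_cond_prob_cv0].
Qed.
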